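(* For any integer $k\ge0$, any $\alpha=\frac{p}{q}$ and any $\lambda\in\mathbb{R}$, $$\operatorname{tr}H^{2k+1}_{\alpha,\lambda,\frac12}R_{\frac12}=-\operatorname{tr}H^{2k+1}_{\alpha,\lambda,0}R_0,\qquad \operatorname{tr}H^{2k+1}_{\alpha,\lambda,\frac\alpha2}R_{\frac\alpha2}=\operatorname{tr}H^{2k+1}_{\alpha,\lambda,\frac{1+\alpha}2}R_{\frac{1+\alpha}2}.$$
   Context: For $\alpha,\lambda,\theta\in\mathbb{R}$, $H_{\alpha,\lambda,\theta}$ on $\ell^2(\mathbb{Z})$ is $(H\psi)_n=\psi_{n+1}+\psi_{n-1}+2\lambda\cos(2\pi(n\alpha+\theta))\psi_n$; $A_{ij}$ denotes matrix entries in the standard basis. $R_0=R_{1/2}:(\psi_n)\mapsto(\psi_{-n})$ and $R_{\alpha/2}=R_{(1+\alpha)/2}:(\psi_n)\mapsto(\psi_{-1-n})$. The traces are defined as $\operatorname{tr}AR_\theta=\sum_{j\in\mathbb{Z}}A_{j,-j}$ for $\theta\in\{0,\frac12\}$ and $\sum_{j\in\mathbb{Z}}A_{j,-1-j}$ for $\theta\in\{\frac\alpha2,\frac{1+\alpha}2\}$, with $A=H^{2k+1}_{\alpha,\lambda,\theta}$ (finitely many nonzero terms). *)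

From Stdlib Require Import Reals ZArith Lia Lra.
Open Scope R_scope.

Definition amo_pot (alpha lambda theta : R) (n : Z) : R :=
  2 * lambda * cos (2 * PI * (IZR n * alpha + theta)).

(* Matrix entries (H^m)_{ij} of the m-th power of
   (H psi)_n = psi_{n+1} + psi_{n-1} + v_n psi_n, in the standard basis.
   Since H^(m+1) = H * H^m and H_{ik} = [k=i+1] + [k=i-1] + v_i [k=i],
   (H^(m+1))_{ij} = (H^m)_{i+1,j} + (H^m)_{i-1,j} + v_i (H^m)_{ij}. *)
Fixpoint amo_pow (alpha lambda theta : R) (m : nat) (i j : Z) : R :=
  match m with
  | O => if Z.eq_dec i j then 1 else 0
  | S m' => amo_pow alpha lambda theta m' (i + 1) j
            + amo_pow alpha lambda theta m' (i - 1) j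
            + amo_pot alpha lambda theta i * amo_pow alpha lambda theta m' i j
  end.

(* tr (A R_0) = tr (A R_{1/2}) = sum_{j in Z} A_{j,-j}.
   For A = H^m, A_{ij} = 0 whenever |i - j| > m, so all nonzero terms have
   |j| <= m; the sum is taken over j in [-m, m] (2m+1 terms). *)
Definition tr_R0 (A : Z -> Z -> R) (m : nat) : R :=
  sum_f_R0 (fun t => let j := (Z.of_nat t - Z.of_nat m)%Z in A j (- j)%Z)
           (2 * m)%nat.

(* tr (A R_{alpha/2}) = tr (A R_{(1+alpha)/2}) = sum_{j in Z} A_{j,-1-j};
   nonzero terms satisfy |2j+1| <= m, hence |j| <= m. *)
Definition tr_Ralpha (A : Z -> Z -> R) (m : nat) : R :=
  sum_f_R0 (fun t => let j := (Z.of_nat t - Z.of_nat m)%Z in A j (- 1 - j)%Z)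
           (2 * m)%nat.

(** Shifting the phase by 1/2 flips the sign of the potential, and conjugating by
    U = diag((-1)^n) flips the sign of the hopping terms, so
    H_{θ+1/2} = - U H_θ U and (H_{θ+1/2}^m)_{ij} = (-1)^(m+i+j) (H_θ^m)_{ij}.
    On the antidiagonal j = -i the sign is (-1)^m, on j = -1-i it is (-1)^(m+1);
    for odd m these are -1 and 1.  The second identity follows since
    (1+α)/2 = α/2 + 1/2. *)

From Stdlib Require Import Reals ZArith Lra.
Open Scope R_scope.

Definition alt_sign (n : Z) : R := if Z.even n then 1 else -1.

Lemma alt_sign_succ (n : Z) : alt_sign (n + 1) = - alt_sign n.
Proof. unfold alt_sign; rewrite Z.even_add; destruct (Z.even n); simpl; lra. Qed.

Lemma alt_sign_pred (n : Z) : alt_sign (n - 1) = - alt_sign n.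
Proof. unfold alt_sign; rewrite Z.even_sub; destruct (Z.even n); simpl; lra. Qed.

Lemma alt_sign_double (n : Z) : alt_sign (n + n) = 1.
Proof. unfold alt_sign; rewrite Z.even_add; destruct (Z.even n); reflexivity. Qed.

Lemma amo_pot_shift_half (alpha lambda theta : R) (n : Z) :
  amo_pot alpha lambda (theta + 1/2) n = - amo_pot alpha lambda theta n.
Proof.
  unfold amo_pot.
  replace (2 * PI * (IZR n * alpha + (theta + 1/2)))
    with (2 * PI * (IZR n * alpha + theta) + PI) by field.
  rewrite neg_cos; ring.
Qed.

Lemma amo_pow_shift_half (alpha lambda theta : R) (m : nat) (i j : Z) :
  amo_pow alpha lambda (theta + 1/2) m i j
    = (-1) ^ m * alt_sign (i + j) * amo_pow alpha lambda theta m i j.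
Proof.
  revert i j; induction m as [|m IH]; intros i j; simpl.
  - destruct (Z.eq_dec i j) as [<-|]; [rewrite alt_sign_double|]; ring.
  - rewrite !IH, amo_pot_shift_half.
    replace (i + 1 + j)%Z with (i + j + 1)%Z by ring.
    replace (i - 1 + j)%Z with (i + j - 1)%Z by ring.
    rewrite alt_sign_succ, alt_sign_pred; ring.
Qed.

Lemma tr_R0_shift_half (alpha lambda theta : R) (m n : nat) :
  tr_R0 (amo_pow alpha lambda (theta + 1/2) m) n
    = (-1) ^ m * tr_R0 (amo_pow alpha lambda theta m) n.
Proof.
  unfold tr_R0; rewrite scal_sum; apply sum_eq; intros t _.
  cbv zeta; rewrite amo_pow_shift_half, Z.add_opp_diag_r.
  unfold alt_sign; simpl; ring.
Qed.

Lemma tr_Ralpha_shift_half (alpha lambda theta : R) (m n : nat) :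
  tr_Ralpha (amo_pow alpha lambda (theta + 1/2) m) n
    = (-1) ^ S m * tr_Ralpha (amo_pow alpha lambda theta m) n.
Proof.
  unfold tr_Ralpha; rewrite scal_sum; apply sum_eq; intros t _.
  rewrite amo_pow_shift_half.
  set (j := (Z.of_nat t - Z.of_nat n)%Z).
  replace (j + (-1 - j))%Z with (-1)%Z by ring.
  unfold alt_sign; simpl; ring.
Qed.

Theorem lemmap (k : nat) (p : Z) (q : Z) (hq : (q <> 0)%Z) (lambda : R) :
  let alpha := IZR p / IZR q in
  let m := (2 * k + 1)%nat in
  tr_R0 (amo_pow alpha lambda (1/2) m) m
    = - tr_R0 (amo_pow alpha lambda 0 m) m
  /\
  tr_Ralpha (amo_pow alpha lambda (alpha / 2) m) m
    = tr_Ralpha (amo_pow alpha lambda ((1 + alpha) / 2) m) m.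
Proof.
  intros alpha m.
  assert (m_odd : m = S (2 * k)) by (unfold m; rewrite Nat.add_1_r; reflexivity).
  split.
  - replace (1/2) with (0 + 1/2) by ring.
    rewrite tr_R0_shift_half, m_odd, pow_1_odd; ring.
  - replace ((1 + alpha) / 2) with (alpha / 2 + 1/2) by field.
    rewrite tr_Ralpha_shift_half, m_odd, <- tech_pow_Rmult, pow_1_odd; ring.
Qed.
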